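(* Let $G=D\times L$ be a locally compact second countable group, with $D$ discrete, and identify $L$ with $\{1\}\times L$. Then the map $\mathcal{C}(G)\to\mathcal{C}(L)$, $H\mapsto H\cap L$, is continuous.
   Context: For a locally compact group $G$, $\mathcal{C}(G)$ is the set of closed subgroups of $G$ with the Chabauty topology, generated by the sets $\{H:H\cap K=\emptyset\}$ ($K\subset G$ compact) and $\{H:H\cap U\neq\emptyset\}$ ($U\subset G$ open). *)

From HB Require Import structures.
From mathcomp Require Import all_boot all_order all_algebra.
From mathcomp Require Import all_classical all_reals all_analysis.
Set Implicit Arguments. Unset Strict Implicit. Unset Printing Implicit Defensive.
Local Open Scope classical_set_scope.

Definition is_group {T : Type} (mul : T -> T -> T) (inv : T -> T) (e : T) : Prop :=
  [/\ forall x y z, mul x (mul y z) = mul (mul x y) z,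
      forall x, mul e x = x /\ mul x e = x &
      forall x, mul (inv x) x = e /\ mul x (inv x) = e].

Definition is_topological_group {T : topologicalType}
  (mul : T -> T -> T) (inv : T -> T) (e : T) : Prop :=
  [/\ is_group mul inv e,
      continuous (fun p : T * T => mul p.1 p.2) &
      continuous inv].

Definition closed_subgroup {T : topologicalType}
  (mul : T -> T -> T) (inv : T -> T) (e : T) (H : set T) : Prop :=
  [/\ closed H, H e,
      forall x y, H x -> H y -> H (mul x y) &
      forall x, H x -> H (inv x)].

Definition chabauty_basic {T : topologicalType}
  (n : nat) (K : nat -> set T) (m : nat) (U : nat -> set T) (H : set T) : Prop :=
  (forall i, (i < n)%N -> H `&` K i = set0) /\
  (forall j, (j < m)%N -> H `&` U j !=set0).

(* Openness for the Chabauty topology on the space C(T) of closed subgroups,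
   i.e. the topology generated by {H | H ∩ K = ∅} (K compact) and
   {H | H ∩ U ≠ ∅} (U open): a set S of closed subgroups (S is only looked at
   on closed subgroups) is open iff each of its points has a neighbourhood
   which is a finite intersection of subbasic sets, contained in S. *)
Definition chabauty_open {T : topologicalType}
  (mul : T -> T -> T) (inv : T -> T) (e : T) (S : set (set T)) : Prop :=
  forall H, closed_subgroup mul inv e H -> S H ->
  exists (n : nat) (K : nat -> set T) (m : nat) (U : nat -> set T),
    [/\ forall i, (i < n)%N -> compact (K i),
        forall j, (j < m)%N -> open (U j),
        chabauty_basic n K m U H &
        forall H', closed_subgroup mul inv e H' ->
          chabauty_basic n K m U H' -> S H'].

Definition prod_mul {D L : Type} (mD : D -> D -> D) (mL : L -> L -> L)
  (x y : D * L) : D * L := (mD x.1 y.1, mL x.2 y.2).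
Definition prod_inv {D L : Type} (iD : D -> D) (iL : L -> L) (x : D * L) : D * L :=
  (iD x.1, iL x.2).

(* H ∩ L, where L is identified with {1} × L. *)
Definition slice {D L : Type} (eD : D) (H : set (D * L)) : set L :=
  [set l | H (eD, l)].

From HB Require Import structures.
From mathcomp Require Import all_boot all_order all_algebra.
From mathcomp Require Import all_classical all_reals all_analysis.
Local Open Scope classical_set_scope.

(* Since D is discrete, {1} x K is compact and {1} x U is open for K compact
   and U open in L, and H meets {1} x A exactly when H ∩ L meets A.  Hence
   the preimage under H |-> H ∩ L of a basic Chabauty neighbourhood of H ∩ L
   is a basic Chabauty neighbourhood of H. *)

Lemma pair1_continuous (D L : topologicalType) (d : D) : continuous (pair d : L -> D * L).
Proof. by move=> l; apply: cvg_pair; [exact: cvg_cst | exact: cvg_id]. Qed.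

Lemma open_set1X (D : discreteTopologicalType) (L : topologicalType) (d : D) (U : set L) :
  open U -> open ([set d] `*` U).
Proof.
move=> oU; rewrite openE => -[x l] [/= -> Ul].
exists ([set d], U) => //; split => /=; first exact: discrete_set1.
exact: open_nbhs_nbhs.
Qed.

Lemma compact_set1X (D L : topologicalType) (d : D) (K : set L) :
  compact K -> compact ([set d] `*` K).
Proof. exact/compact_setX/compact_set1. Qed.

Section GroupIdentity.
Context {T : Type} {mul : T -> T -> T} {inv : T -> T} {e : T}.
Hypothesis hG : is_group mul inv e.

Lemma is_group_mul1 : mul e e = e.
Proof. by case: hG => _ /(_ e) []. Qed.

Lemma is_group_inv1 : inv e = e.
Proof. by case: hG => _ /(_ (inv e)) [_ <-] /(_ e) []. Qed.

End GroupIdentity.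

Section Slice.
Variables (D L : topologicalType) (d : D) (H : set (D * L)).

Lemma sliceE : slice d H = pair d @^-1` H.
Proof. by []. Qed.

Lemma slice_setI_eq0 (A : set L) :
  H `&` ([set d] `*` A) = set0 <-> slice d H `&` A = set0.
Proof.
rewrite -!subset0; split=> HA.
- by move=> l [Hl Al]; apply: (HA (d, l)).
- by move=> [x l] [Hxl [/= xd Al]]; subst x; apply: (HA l).
Qed.

Lemma slice_setI_neq0 (A : set L) :
  H `&` ([set d] `*` A) !=set0 <-> slice d H `&` A !=set0.
Proof.
split=> [[[x l] [Hxl [/= xd Al]]] | [l [Hl Al]]]; last by exists (d, l).
by subst x; exists l.
Qed.

Lemma chabauty_basic_slice (n : nat) (K : nat -> set L) (m : nat) (U : nat -> set L) :
  chabauty_basic n (fun i => [set d] `*` K i) m (fun j => [set d] `*` U j) H <->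
  chabauty_basic n K m U (slice d H).
Proof.
by split=> -[HK HU]; split=> [i /HK/slice_setI_eq0 | j /HU/slice_setI_neq0].
Qed.

End Slice.

Lemma slice_closed_subgroup {D : topologicalType} {mD : D -> D -> D} {iD : D -> D} {eD : D}
    {L : topologicalType} {mL : L -> L -> L} {iL : L -> L} {eL : L} {H : set (D * L)} :
  is_group mD iD eD ->
  closed_subgroup (prod_mul mD mL) (prod_inv iD iL) (eD, eL) H ->
  closed_subgroup mL iL eL (slice eD H).
Proof.
move=> gD [cH He Hmul Hinv]; split=> //.
- by rewrite sliceE; apply: closed_comp => // l _; exact: pair1_continuous.
- by move=> x y Hx Hy; have := Hmul _ _ Hx Hy; rewrite /prod_mul /= (is_group_mul1 gD).
- by move=> x Hx; have := Hinv _ Hx; rewrite /prod_inv /= (is_group_inv1 gD).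
Qed.

Theorem lemma3
  (D : discreteTopologicalType) (mD : D -> D -> D) (iD : D -> D) (eD : D)
  (L : topologicalType) (mL : L -> L -> L) (iL : L -> L) (eL : L)
  (hD : is_topological_group mD iD eD)
  (hL : is_topological_group mL iL eL)
  (hlc : locally_compact [set: D * L])
  (hsc : @second_countable (D * L)%type)
  (hT2 : hausdorff_space (D * L)%type) :
  forall S : set (set L), chabauty_open mL iL eL S ->
    chabauty_open (prod_mul mD mL) (prod_inv iD iL) (eD, eL)
      (fun H : set (D * L) => S (slice eD H)).
Proof.
case: hD => gD _ _ S hS H cH SH.
have [n [K [m [U [cK oU bH impS]]]]] := hS _ (slice_closed_subgroup gD cH) SH.
exists n, (fun i => [set eD] `*` K i), m, (fun j => [set eD] `*` U j); split.
- by move=> i /cK; exact: compact_set1X.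
- by move=> j /oU; exact: open_set1X.
- exact/chabauty_basic_slice.
- move=> H' cH' /chabauty_basic_slice bH'.
  apply: impS bH'; exact: slice_closed_subgroup gD cH'.
Qed.
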